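(* Let $A$ be a dual Banach algebra. If $A^{**}$, equipped with either the first or the second Arens product, is weakly amenable, then $A$ is weakly amenable.
   Context: A dual Banach algebra is a Banach algebra $A$ which is the dual space of a Banach space $A_*$ (i.e. $A=(A_* )^*$) such that multiplication in $A$ is separately weak$^*$-continuous. Arens products on $A^{**}$: for $a,b\in A$, $f\in A^*$, $F,G\in A^{**}$, $\langle a\cdot f,b\rangle=f(ba)$, $\langle f\cdot a,b\rangle=f(ab)$, $\langle f\cdot F,a\rangle=\langle F,a\cdot f\rangle$, $\langle F\cdot f,a\rangle=\langle F,f\cdot a\rangle$, $\langle F\Box G,f\rangle=\langle F,G\cdot f\rangle$, $\langle F\Diamond G,f\rangle=\langle G,f\cdot F\rangle$. A Banach algebra $C$ is weakly amenable if every bounded derivation $D:C\to C^*$ ($D(ab)=a\cdot D(b)+D(a)\cdot b$) is inner, i.e. $D(a)=a\cdot f-f\cdot a$ for some $f\in C^*$. *)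

From HB Require Import structures.
From mathcomp Require Import all_boot all_order all_algebra.
From mathcomp Require Import all_classical all_reals all_analysis.
Set Implicit Arguments. Unset Strict Implicit. Unset Printing Implicit Defensive.
Import Order.TTheory GRing.Theory Num.Theory.
Import numFieldNormedType.Exports.
Local Open Scope classical_set_scope.
Local Open Scope ring_scope.

Section BanachDefs.
Variable K : numFieldType.

Definition banach_algebra (A : completeNormedModType K) (mul : A -> A -> A) : Prop :=
  [/\ (forall a b c, mul (mul a b) c = mul a (mul b c)),
      (forall a b c, mul (a + b) c = mul a c + mul b c),
      (forall a b c, mul a (b + c) = mul a b + mul a c),
      (forall (k : K) a b, mul (k *: a) b = k *: mul a b /\ mul a (k *: b) = k *: mul a b)
    & (forall a b, `|mul a b| <= `|a| * `|b|)].

Definition lin_fun (V : normedModType K) (g : V -> K) : Prop :=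
  (forall x y, g (x + y) = g x + g y) /\ (forall (k : K) x, g (k *: x) = k * g x).

Definition bdd_lin (V : normedModType K) (g : V -> K) : Prop :=
  lin_fun g /\ exists M : K, forall x, `|g x| <= M * `|x|.

(** Weak*-continuity of a map T : A -> A, where A is identified with E^*
    through Phi (the weak* topology is the initial topology of the maps
    x |-> Phi x e, e in E; continuity is expressed through filters). *)
Definition weakstar_continuous (E A : normedModType K) (Phi : A -> E -> K)
  (T : A -> A) : Prop :=
  forall (F : set_system A) (a : A), Filter F ->
    (forall e, (fun x => Phi x e) @ F --> Phi a e) ->
    forall e, (fun x => Phi (T x) e) @ F --> Phi (T a) e.

(** A is a dual Banach algebra with predual E: Phi : A -> E^* is an
    isometric linear isomorphism onto the dual of E, and multiplication is
    separately weak*-continuous. *)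
Definition dual_banach_algebra (E A : completeNormedModType K)
  (mul : A -> A -> A) (Phi : A -> E -> K) : Prop :=
  [/\ banach_algebra mul,
      (forall a, lin_fun (Phi a)) /\
      (forall a b e, Phi (a + b) e = Phi a e + Phi b e) /\
      (forall (k : K) a e, Phi (k *: a) e = k * Phi a e),
      (forall a, (forall e, `|Phi a e| <= `|a| * `|e|) /\
                 (forall c : K, (forall e, `|Phi a e| <= c * `|e|) -> `|a| <= c)),
      (forall g : E -> K, bdd_lin g -> exists a, forall e, Phi a e = g e)
    & (forall b, weakstar_continuous Phi (fun a => mul a b) /\
                 weakstar_continuous Phi (fun a => mul b a))].

(** Weak amenability of a Banach algebra presented as a carrier X with a
    membership predicate [mem], an equality [eqv] of elements, a norm-bound
    relation [nb x c] meaning ||x|| <= c, and operations add, scale, mul.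
    A bounded derivation D : C -> C^* is encoded as D x y = <D(x), y>. *)
Definition weakly_amenable (X : Type) (mem : X -> Prop) (eqv : X -> X -> Prop)
  (nb : X -> K -> Prop) (add : X -> X -> X) (scale : K -> X -> X)
  (mul : X -> X -> X) : Prop :=
  forall D : X -> X -> K,
    (forall x x' y y', mem x -> mem x' -> mem y -> mem y' ->
        eqv x x' -> eqv y y' -> D x y = D x' y') ->
    (forall x y z, mem x -> mem y -> mem z ->
        D (add x y) z = D x z + D y z /\ D z (add x y) = D z x + D z y) ->
    (forall (k : K) x y, mem x -> mem y ->
        D (scale k x) y = k * D x y /\ D x (scale k y) = k * D x y) ->
    (exists M : K, forall x y cx cy, mem x -> mem y -> nb x cx -> nb y cy ->
        `|D x y| <= M * cx * cy) ->
    (forall x y z, mem x -> mem y -> mem z ->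
        D (mul x y) z = D y (mul z x) + D x (mul y z)) ->
    exists f : X -> K,
      [/\ (forall x x', mem x -> mem x' -> eqv x x' -> f x = f x'),
          (forall x y, mem x -> mem y -> f (add x y) = f x + f y),
          (forall (k : K) x, mem x -> f (scale k x) = k * f x),
          (exists M : K, forall x c, mem x -> nb x c -> `|f x| <= M * c)
        & (forall x y, mem x -> mem y -> D x y = f (mul y x) - f (mul x y))].

(** The bidual A^** , represented by functionals on (A -> K) restricted to
    the dual A^* (bounded linear functionals on A). *)
Section Bidual.
Variable A : normedModType K.

Definition dual_nb (f : A -> K) (d : K) : Prop := forall a, `|f a| <= d * `|a|.

Definition bidual_nb (F : (A -> K) -> K) (c : K) : Prop :=
  forall f d, bdd_lin f -> dual_nb f d -> `|F f| <= c * d.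

Definition bidual_mem (F : (A -> K) -> K) : Prop :=
  [/\ (forall f g, bdd_lin f -> bdd_lin g -> F (fun a => f a + g a) = F f + F g),
      (forall (k : K) f, bdd_lin f -> F (fun a => k * f a) = k * F f)
    & exists M : K, bidual_nb F M].

Definition bidual_eqv (F G : (A -> K) -> K) : Prop :=
  forall f, bdd_lin f -> F f = G f.

Definition bidual_add (F G : (A -> K) -> K) : (A -> K) -> K := fun f => F f + G f.
Definition bidual_scale (k : K) (F : (A -> K) -> K) : (A -> K) -> K := fun f => k * F f.

Variable mul : A -> A -> A.
(** first Arens product: <F □ G, f> = <F, G.f>, <G.f, a> = <G, f.a>,
    <f.a, b> = f(ab) *)
Definition arens1 (F G : (A -> K) -> K) : (A -> K) -> K :=
  fun f => F (fun a => G (fun b => f (mul a b))).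
(** second Arens product: <F ◇ G, f> = <G, f.F>, <f.F, a> = <F, a.f>,
    <a.f, b> = f(ba) *)
Definition arens2 (F G : (A -> K) -> K) : (A -> K) -> K :=
  fun f => G (fun a => F (fun b => f (mul b a))).
End Bidual.

End BanachDefs.

(* The predual [E] embeds into [A^*] ([predual_emb]); the adjoint of this
   embedding, [bidual_proj : A^** -> A], is a bounded linear left inverse of
   the canonical embedding [bidual_emb : A -> A^**].  Separate
   weak*-continuity of the product means that the functionals
   [b |-> <a b, e>] and [b |-> <b a, e>] are again given by elements of [E],
   i.e. [E] is an A-submodule of [A^*]; this makes [bidual_proj]
   multiplicative for both Arens products.  A bounded derivation [D] on [A]
   therefore lifts to the bounded derivation
   [(F, G) |-> D (bidual_proj F) (bidual_proj G)] on [A^**]; if the latter is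
   inner, implemented by [f], then [D] is implemented by [f \o bidual_emb]. *)

From HB Require Import structures.
From mathcomp Require Import all_boot all_order all_algebra.
From mathcomp Require Import all_classical all_reals all_analysis.
From mathcomp Require Import ring.
Import Order.TTheory GRing.Theory Num.Theory.
Import numFieldNormedType.Exports.
Local Open Scope ring_scope.
Set Implicit Arguments. Unset Strict Implicit.

Section WeakStarContinuity.
Variables (K : numFieldType) (E A : normedModType K) (Phi : A -> E -> K).
Hypotheses (PhiDl : forall a b e, Phi (a + b) e = Phi a e + Phi b e)
           (PhiZl : forall k a e, Phi (k *: a) e = k * Phi a e)
           (PhiDr : forall a e1 e2, Phi a (e1 + e2) = Phi a e1 + Phi a e2)
           (PhiZr : forall a k e, Phi a (k *: e) = k * Phi a e).

Lemma pairing0l e : Phi 0 e = 0.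
Proof. by have := PhiZl 0 0 e; rewrite scale0r mul0r. Qed.

Lemma pairing0r a : Phi a 0 = 0.
Proof. by have := PhiZr a 0 0; rewrite scale0r mul0r. Qed.

Lemma pairingBl a b e : Phi (a - b) e = Phi a e - Phi b e.
Proof. by rewrite -scaleN1r PhiDl PhiZl mulN1r. Qed.

(* Induction on [s]: if [Phi _ e0] does not vanish on the joint kernel of
   [pre], then [e0] may be moved into [pre] and the representative corrected
   by a multiple of [e0]; otherwise [e0] is redundant. *)
Lemma functional_on_joint_kernel (phi : A -> K)
    (phiD : forall x y, phi (x + y) = phi x + phi y)
    (phiZ : forall k x, phi (k *: x) = k * phi x) (s pre : seq E) :
  (forall b, (forall e, e \in pre ++ s -> Phi b e = 0) -> phi b = 0) ->
  exists e', forall b, (forall e, e \in pre -> Phi b e = 0) -> phi b = Phi b e'.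
Proof.
elim: s pre => [|e0 s IHs] pre phi_ker.
  by exists 0 => b b_ker; rewrite pairing0r phi_ker // cats0.
have [[b0 [b0_ker b0e0_neq0]]|e0_redundant] :=
  pselect (exists b0, (forall e, e \in pre -> Phi b0 e = 0) /\ Phi b0 e0 != 0).
- have [|e'' He''] := IHs (e0 :: pre).
    move=> b b_ker; apply: phi_ker => e; rewrite mem_cat in_cons => He.
    by apply: b_ker; rewrite mem_cat in_cons; case/orP: He => [->|/orP[]->];
      rewrite ?orbT.
  exists (e'' + ((phi b0 - Phi b0 e'') / Phi b0 e0) *: e0) => b b_ker.
  set t := Phi b e0 / Phi b0 e0.
  have Ht : phi (b - t *: b0) = Phi (b - t *: b0) e''.
    apply: He'' => e; rewrite in_cons => /orP[/eqP->|He].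
      by rewrite pairingBl PhiZl /t divfK // subrr.
    by rewrite pairingBl PhiZl b_ker // b0_ker // mulr0 subrr.
  move: Ht; rewrite -scaleNr phiD phiZ PhiDl PhiZl PhiDr PhiZr => Ht.
  have -> : phi b = phi b + - t * phi b0 + t * phi b0 by ring.
  by rewrite Ht /t; ring.
- apply: IHs => b b_ker; apply: phi_ker => e; rewrite mem_cat in_cons.
  case/orP=> [He|/orP[/eqP->|He]]; last by apply: b_ker; rewrite mem_cat He orbT.
    by apply: b_ker; rewrite mem_cat He.
  apply/eqP/negPn/negP => be0_neq0; apply: e0_redundant; exists b; split => //.
  by move=> e1 He1; apply: b_ker; rewrite mem_cat He1.
Qed.

(* The sets [{b | |Phi b e'| < 1 for e' in s}] form a filter base converging
   weakly* to [0]; a homogeneous functional continuous along it vanishes on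
   the joint kernel of some [s], since otherwise scaling makes it equal to 2. *)
Lemma weakstar_continuous_joint_kernel (T : A -> A) e :
  weakstar_continuous Phi T ->
  (forall k b, Phi (T (k *: b)) e = k * Phi (T b) e) ->
  exists s : seq E, forall b, (forall e', e' \in s -> Phi b e' = 0) ->
    Phi (T b) e = 0.
Proof.
move=> T_cont TZ.
have T0 : Phi (T 0) e = 0 by have := TZ 0 0; rewrite scale0r mul0r.
pose F : set_system A := fun S => exists s : seq E,
  forall b, (forall e', e' \in s -> `|Phi b e'| < 1) -> S b.
have F_filter : Filter F.
  split; first by exists [::].
  - move=> P Q [s1 H1] [s2 H2]; exists (s1 ++ s2) => b Hb; split.
      by apply: H1 => e' He'; apply: Hb; rewrite mem_cat He'.
    by apply: H2 => e' He'; apply: Hb; rewrite mem_cat He' orbT.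
  - by move=> P Q PQ [s H]; exists s => b /H /PQ.
have F_cvg0 e' : ((fun x => Phi x e') @ F --> Phi 0 e')%classic.
  apply/cvgrPdist_lt => eps eps_gt0; exists [:: eps^-1 *: e'] => b Hb.
  have := Hb (eps^-1 *: e'); rewrite mem_seq1 eqxx PhiZr normrM => /(_ isT).
  rewrite pairing0l sub0r normrN gtr0_norm ?invr_gt0 //.
  by rewrite mulrC ltr_pdivrMr // mul1r.
have /cvgrPdist_lt /(_ 1 ltr01) [s Hs] := T_cont F 0 F_filter F_cvg0 e.
exists s => b b_ker; apply/eqP/negPn/negP => Tb_neq0.
have : `|Phi (T 0) e - Phi (T ((2 / Phi (T b) e) *: b)) e| < 1.
  by apply: Hs => e' He'; rewrite PhiZl b_ker // mulr0 normr0.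
by rewrite T0 sub0r normrN TZ divfK // normr_nat lt_gtF // ltr1n.
Qed.

Lemma weakstar_continuous_transpose (T : A -> A) e :
  weakstar_continuous Phi T ->
  (forall x y, T (x + y) = T x + T y) -> (forall k x, T (k *: x) = k *: T x) ->
  exists e', forall b, Phi (T b) e = Phi b e'.
Proof.
move=> T_cont TD TZ.
have TeZ k b : Phi (T (k *: b)) e = k * Phi (T b) e by rewrite TZ PhiZl.
have TeD x y : Phi (T (x + y)) e = Phi (T x) e + Phi (T y) e by rewrite TD PhiDl.
have [s Hs] := weakstar_continuous_joint_kernel T_cont TeZ.
have [e' He'] := functional_on_joint_kernel (pre := [::]) TeD TeZ Hs.
by exists e' => b; apply: He'.
Qed.

End WeakStarContinuity.

Section BidualEmbedding.
Variables (K : numFieldType) (A : normedModType K).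

Definition bidual_emb (a : A) : (A -> K) -> K := fun f => f a.

Lemma bidual_mem_emb a : bidual_mem (bidual_emb a).
Proof. by split=> //; exists `|a| => f d _ fd; rewrite /bidual_emb mulrC. Qed.

Lemma bidual_mem_add (F G : (A -> K) -> K) :
  bidual_mem F -> bidual_mem G -> bidual_mem (bidual_add F G).
Proof.
case=> FD FZ [M1 FM] [GD GZ [M2 GM]]; split.
- by move=> f g hf hg; rewrite /bidual_add FD // GD // addrACA.
- by move=> k f hf; rewrite /bidual_add FZ // GZ // mulrDr.
- exists (M1 + M2) => f d hf hd; rewrite /bidual_add mulrDl.
  by apply: le_trans (ler_normD _ _) _; apply: lerD; [apply: FM | apply: GM].
Qed.

Lemma bidual_mem_scale k (F : (A -> K) -> K) :
  bidual_mem F -> bidual_mem (bidual_scale k F).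
Proof.
case=> FD FZ [M FM]; split.
- by move=> f g hf hg; rewrite /bidual_scale FD // mulrDr.
- by move=> c f hf; rewrite /bidual_scale FZ // mulrCA.
- exists (`|k| * M) => f d hf hd; rewrite /bidual_scale normrM -mulrA.
  by apply: ler_wpM2l => //; apply: FM.
Qed.

Lemma bidual_emb_add x y :
  bidual_eqv (bidual_emb (x + y)) (bidual_add (bidual_emb x) (bidual_emb y)).
Proof. by move=> g [[gD _] _]; apply: gD. Qed.

Lemma bidual_emb_scale k x :
  bidual_eqv (bidual_emb (k *: x)) (bidual_scale k (bidual_emb x)).
Proof. by move=> g [[_ gZ] _]; apply: gZ. Qed.

(* For [x = 0] this fails when [A] is trivial: then every [d], even a negative
   one, bounds the norm of every functional on [A]. *)
Lemma bidual_nb_emb x c : x != 0 -> `|x| <= c -> bidual_nb (bidual_emb x) c.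
Proof.
rewrite -normr_gt0 => x_gt0 xc g d _ gd; apply: le_trans (gd x) _.
have d_ge0 : 0 <= d by rewrite -(pmulr_lge0 _ x_gt0); apply: le_trans (gd x).
by rewrite mulrC ler_wpM2r.
Qed.

Lemma bidual_bounded_comp_emb (f : ((A -> K) -> K) -> K) :
  (forall F G, bidual_mem F -> bidual_mem G -> bidual_eqv F G -> f F = f G) ->
  (forall k F, bidual_mem F -> f (bidual_scale k F) = k * f F) ->
  (exists M, forall F c, bidual_mem F -> bidual_nb F c -> `|f F| <= M * c) ->
  exists M, forall x c, `|x| <= c -> `|f (bidual_emb x)| <= M * c.
Proof.
move=> f_eqv fZ [M fM]; exists `|M| => x c xc.
have c_ge0 : 0 <= c by apply: le_trans xc.
have [->|x_neq0] := eqVneq x 0.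
  have -> : f (bidual_emb 0) = 0.
    have := bidual_emb_scale 0 (0 : A); rewrite scale0r => emb0.
    rewrite (f_eqv _ _ _ _ emb0) ?fZ ?mul0r //;
      by [apply: bidual_mem_emb | apply/bidual_mem_scale/bidual_mem_emb].
  by rewrite normr0 mulr_ge0.
have fx := fM _ _ (bidual_mem_emb x) (bidual_nb_emb x_neq0 xc).
by rewrite -(ger0_norm c_ge0) -normrM ger0_norm // (le_trans (normr_ge0 _) fx).
Qed.

End BidualEmbedding.

Section DualBanachAlgebra.
Variables (K : numFieldType) (E A : completeNormedModType K)
  (mul : A -> A -> A) (Phi : A -> E -> K).
Hypothesis A_dual : dual_banach_algebra mul Phi.

Lemma pairingDl a b e : Phi (a + b) e = Phi a e + Phi b e.
Proof. by case: A_dual => _ [_ [PhiD _]] _ _ _; apply: PhiD. Qed.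

Lemma pairingZl k a e : Phi (k *: a) e = k * Phi a e.
Proof. by case: A_dual => _ [_ [_ PhiZ]] _ _ _; apply: PhiZ. Qed.

Lemma pairingDr a e1 e2 : Phi a (e1 + e2) = Phi a e1 + Phi a e2.
Proof. by case: A_dual => _ [Phi_lin _] _ _ _; apply: (Phi_lin a).1. Qed.

Lemma pairingZr a k e : Phi a (k *: e) = k * Phi a e.
Proof. by case: A_dual => _ [Phi_lin _] _ _ _; apply: (Phi_lin a).2. Qed.

Lemma pairing_norm a e : `|Phi a e| <= `|a| * `|e|.
Proof. by case: A_dual => _ _ Phi_iso _ _; apply: (Phi_iso a).1. Qed.

Lemma norm_le_pairing a c : (forall e, `|Phi a e| <= c * `|e|) -> `|a| <= c.
Proof. by case: A_dual => _ _ Phi_iso _ _; apply: (Phi_iso a).2. Qed.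

Lemma pairing_onto (g : E -> K) : bdd_lin g -> exists a, forall e, Phi a e = g e.
Proof. by case: A_dual => _ _ _ Phi_onto _; apply: Phi_onto. Qed.

Lemma pairing_inj a b : (forall e, Phi a e = Phi b e) -> a = b.
Proof.
move=> Hab; apply/eqP; rewrite -subr_eq0 -normr_le0.
apply: norm_le_pairing => e.
by rewrite (pairingBl pairingDl pairingZl) Hab subrr normr0 mul0r.
Qed.

Lemma mulDl a b c : mul (a + b) c = mul a c + mul b c.
Proof. by case: A_dual => [[_ H _ _ _]] _ _ _ _; apply: H. Qed.

Lemma mulDr a b c : mul a (b + c) = mul a b + mul a c.
Proof. by case: A_dual => [[_ _ H _ _]] _ _ _ _; apply: H. Qed.

Lemma mulZl k a b : mul (k *: a) b = k *: mul a b.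
Proof. by case: A_dual => [[_ _ _ H _]] _ _ _ _; apply: (H k a b).1. Qed.

Lemma mulZr k a b : mul a (k *: b) = k *: mul a b.
Proof. by case: A_dual => [[_ _ _ H _]] _ _ _ _; apply: (H k a b).2. Qed.

Lemma predual_mull a e : exists e', forall b, Phi (mul a b) e = Phi b e'.
Proof.
apply: (weakstar_continuous_transpose pairingDl pairingZl pairingDr pairingZr).
- by case: A_dual => _ _ _ _ /(_ a) [].
- by move=> x y; apply: mulDr.
- by move=> k x; apply: mulZr.
Qed.

Lemma predual_mulr a e : exists e', forall b, Phi (mul b a) e = Phi b e'.
Proof.
apply: (weakstar_continuous_transpose pairingDl pairingZl pairingDr pairingZr
          (T := fun b => mul b a)).
- by case: A_dual => _ _ _ _ /(_ a) [].
- by move=> x y; apply: mulDl.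
- by move=> k x; apply: mulZl.
Qed.

Definition predual_emb (e : E) : A -> K := fun a => Phi a e.

Lemma bdd_lin_predual_emb e : bdd_lin (predual_emb e).
Proof.
split; first by split=> [x y|k x]; rewrite /predual_emb ?pairingDl ?pairingZl.
by exists `|e| => x; rewrite mulrC pairing_norm.
Qed.

Lemma dual_nb_predual_emb e : dual_nb (predual_emb e) `|e|.
Proof. by move=> x; rewrite mulrC pairing_norm. Qed.

Lemma bidual_restriction_spec (F : (A -> K) -> K) :
  bidual_mem F -> exists a, forall e, Phi a e = F (predual_emb e).
Proof.
case=> FD FZ [M FM]; apply: pairing_onto; split; first split.
- move=> x y.
  have -> : predual_emb (x + y) = fun a => predual_emb x a + predual_emb y a.
    by apply: funext => a; rewrite /predual_emb pairingDr.
  by apply: FD; apply: bdd_lin_predual_emb.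
- move=> k x.
  have -> : predual_emb (k *: x) = fun a => k * predual_emb x a.
    by apply: funext => a; rewrite /predual_emb pairingZr.
  by apply: FZ; apply: bdd_lin_predual_emb.
- exists M => x.
  by apply: FM; [apply: bdd_lin_predual_emb | apply: dual_nb_predual_emb].
Qed.

(* Outside [bidual_mem] the value is junk. *)
Definition bidual_proj (F : (A -> K) -> K) : A :=
  xget 0 [set a | forall e, Phi a e = F (predual_emb e)].

Lemma bidual_projE (F : (A -> K) -> K) e :
  bidual_mem F -> Phi (bidual_proj F) e = F (predual_emb e).
Proof. by move=> /bidual_restriction_spec /(xgetPex 0) /(_ e). Qed.

Lemma bidual_proj_unique (F : (A -> K) -> K) a :
  (forall e, Phi a e = F (predual_emb e)) -> bidual_proj F = a.
Proof.
move=> Ha; apply: pairing_inj => e.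
by rewrite (xgetPex 0 (ex_intro (fun a => forall e, _) a Ha)) Ha.
Qed.

Lemma bidual_proj_emb a : bidual_proj (bidual_emb a) = a.
Proof. exact: bidual_proj_unique. Qed.

Lemma bidual_proj_eqv (F G : (A -> K) -> K) :
  bidual_mem F -> bidual_eqv F G -> bidual_proj F = bidual_proj G.
Proof.
move=> hF FG; apply/esym/bidual_proj_unique => e.
by rewrite bidual_projE // FG //; apply: bdd_lin_predual_emb.
Qed.

Lemma bidual_proj_add (F G : (A -> K) -> K) : bidual_mem F -> bidual_mem G ->
  bidual_proj (bidual_add F G) = bidual_proj F + bidual_proj G.
Proof.
by move=> hF hG; apply: bidual_proj_unique => e; rewrite pairingDl !bidual_projE.
Qed.

Lemma bidual_proj_scale k (F : (A -> K) -> K) :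
  bidual_mem F -> bidual_proj (bidual_scale k F) = k *: bidual_proj F.
Proof.
by move=> hF; apply: bidual_proj_unique => e; rewrite pairingZl !bidual_projE.
Qed.

Lemma bidual_proj_norm (F : (A -> K) -> K) c :
  bidual_mem F -> bidual_nb F c -> `|bidual_proj F| <= c.
Proof.
move=> hF Fc; apply: norm_le_pairing => e; rewrite bidual_projE //.
by apply: Fc; [apply: bdd_lin_predual_emb | apply: dual_nb_predual_emb].
Qed.

Lemma bidual_apply_mull (G : (A -> K) -> K) a e : bidual_mem G ->
  G (fun b => predual_emb e (mul a b)) = Phi (mul a (bidual_proj G)) e.
Proof.
move=> hG; have [e' He'] := predual_mull a e.
rewrite He' bidual_projE // (_ : (fun b => _) = predual_emb e') //.
by apply: funext => b; rewrite /predual_emb He'.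
Qed.

Lemma bidual_apply_mulr (F : (A -> K) -> K) a e : bidual_mem F ->
  F (fun b => predual_emb e (mul b a)) = Phi (mul (bidual_proj F) a) e.
Proof.
move=> hF; have [e' He'] := predual_mulr a e.
rewrite He' bidual_projE // (_ : (fun b => _) = predual_emb e') //.
by apply: funext => b; rewrite /predual_emb He'.
Qed.

Lemma bidual_proj_arens1 (F G : (A -> K) -> K) : bidual_mem F -> bidual_mem G ->
  bidual_proj (arens1 mul F G) = mul (bidual_proj F) (bidual_proj G).
Proof.
move=> hF hG; apply: bidual_proj_unique => e; rewrite /arens1.
under eq_fun do rewrite bidual_apply_mull //.
by rewrite -bidual_apply_mulr.
Qed.

Lemma bidual_proj_arens2 (F G : (A -> K) -> K) : bidual_mem F -> bidual_mem G ->
  bidual_proj (arens2 mul F G) = mul (bidual_proj F) (bidual_proj G).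
Proof.
move=> hF hG; apply: bidual_proj_unique => e; rewrite /arens2.
under eq_fun do rewrite bidual_apply_mulr //.
by rewrite -bidual_apply_mull.
Qed.

Lemma weakly_amenable_of_bidual
    (prod : ((A -> K) -> K) -> ((A -> K) -> K) -> (A -> K) -> K) :
  (forall F G, bidual_mem F -> bidual_mem G ->
     bidual_proj (prod F G) = mul (bidual_proj F) (bidual_proj G)) ->
  (forall a b, prod (bidual_emb a) (bidual_emb b) = bidual_emb (mul a b)) ->
  weakly_amenable (@bidual_mem K A) (@bidual_eqv K A) (@bidual_nb K A)
      (@bidual_add K A) (@bidual_scale K A) prod ->
  weakly_amenable (fun _ : A => True) (@eq A) (fun (a : A) (c : K) => `|a| <= c)
    (fun a b => a + b) (fun k a => k *: a) mul.
Proof.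
move=> proj_prod prod_emb bidual_wa D _ DD DZ [M DM] D_der.
have [|||||f [f_eqv fD fZ f_bdd f_inner]] :=
  bidual_wa (fun F G => D (bidual_proj F) (bidual_proj G)).
- move=> F F' G G' hF _ hG _ FF' GG'.
  by rewrite (bidual_proj_eqv hF FF') (bidual_proj_eqv hG GG').
- by move=> F G H hF hG hH; rewrite !bidual_proj_add //; apply: DD.
- by move=> k F G hF hG; rewrite !bidual_proj_scale //; apply: DZ.
- exists M => F G cF cG hF hG FcF GcG.
  by apply: DM => //; apply: bidual_proj_norm.
- by move=> F G H hF hG hH; rewrite !proj_prod //; apply: D_der.
have emb_mem := @bidual_mem_emb K A.
exists (fun a => f (bidual_emb a)); split=> //.
- by move=> x x' _ _ ->.
- move=> x y _ _; rewrite -fD //; apply: f_eqv => //; last exact: bidual_emb_add.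
  exact: bidual_mem_add.
- move=> k x _; rewrite -fZ //; apply: f_eqv => //; last exact: bidual_emb_scale.
  exact: bidual_mem_scale.
- have [M' fM'] := bidual_bounded_comp_emb f_eqv fZ f_bdd.
  by exists M' => x c _; apply: fM'.
- move=> a b _ _; have := f_inner _ _ (emb_mem a) (emb_mem b).
  by rewrite !prod_emb !bidual_proj_emb.
Qed.

End DualBanachAlgebra.
Unset Implicit Arguments.

Theorem corollary6p9 (K : numFieldType) (E A : completeNormedModType K)
  (mul : A -> A -> A) (Phi : A -> E -> K) :
  dual_banach_algebra mul Phi ->
  (weakly_amenable (@bidual_mem K A) (@bidual_eqv K A) (@bidual_nb K A)
      (@bidual_add K A) (@bidual_scale K A) (arens1 mul) \/
   weakly_amenable (@bidual_mem K A) (@bidual_eqv K A) (@bidual_nb K A)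
      (@bidual_add K A) (@bidual_scale K A) (arens2 mul)) ->
  weakly_amenable (fun _ : A => True) (@eq A) (fun (a : A) (c : K) => `|a| <= c)
    (fun a b => a + b) (fun k a => k *: a) mul.
Proof.
move=> A_dual [bidual_wa|bidual_wa].
- by apply: (weakly_amenable_of_bidual A_dual (bidual_proj_arens1 A_dual)).
- by apply: (weakly_amenable_of_bidual A_dual (bidual_proj_arens2 A_dual)).
Qed.
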